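(* Let $G$ be a group given by a presentation $\langle X \mid R\rangle$ in which $X$ is a (possibly infinite) set of generators, each $x\in X$ satisfies $x^2=e$ (i.e. the relations $x^2=e$ hold for all $x \in X$), and every relation in $R$ has even length. For $I\subseteq X$, let $G_I$ denote the subgroup of $G$ generated by $I$ and let $G^I=\{w\in G : l(wx)>l(w)\ \text{for all } x\in I\}$. Then every element $w\in G$ has a factorisation $w=ab$ with $a\in G^I$, $b\in G_I$ and $l(w)=l(a)+l(b)$.
   Context: For a group $G$ with presentation $\langle X\mid R\rangle$, every $w\in G$ can be written as $x_1^{a_1}\cdots x_r^{a_r}$ with $x_j\in X$, $a_j=\pm1$; the length $l(w)$ is the smallest such $r$, and a reduced expression of $w$ is an expression of $w$ as a product of $l(w)$ elements of $X\cup X^{-1}$. If a relation in $R$ has the form $u=v$ with $u,v$ in the free group $F(X)$, its length is the length of the word $uv^{-1}$ in $F(X)$. *)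

(* Groups given by presentations <X | R> are
   modelled concretely: elements are words over X ∪ X^{-1}, and equality in
   G is the congruence generated by free cancellation, x^2 = e (x in X) and
   the relations in R. *)
From mathcomp Require Import all_boot.
Set Implicit Arguments. Unset Strict Implicit. Unset Printing Implicit Defensive.

Section Presentation.
Variable X : eqType.

(* a letter (x, false) is x, (x, true) is x^{-1} *)
Definition letter := (X * bool)%type.
Definition word := seq letter.

Definition linv (a : letter) : letter := (a.1, ~~ a.2).
Definition winv (w : word) : word := rev (map linv w).

Definition freered (w : word) : word :=
  foldr (fun a acc => match acc with
                      | b :: t => if b == linv a then t else a :: acc
                      | [::] => [:: a]
                      end) [::] w.

(* length of the relation u = v: length of the reduced word u v^{-1} in F(X) *)
Definition rel_length (r : word * word) : nat := size (freered (r.1 ++ winv r.2)).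

Variable R : word * word -> Prop.

Inductive preseq : word -> word -> Prop :=
| preseq_refl w : preseq w w
| preseq_sym u v : preseq u v -> preseq v u
| preseq_trans u v w : preseq u v -> preseq v w -> preseq u w
| preseq_ctx p q u v : preseq u v -> preseq (p ++ u ++ q) (p ++ v ++ q)
| preseq_free a : preseq [:: a; linv a] [::]
| preseq_sq x : preseq [:: (x, false); (x, false)] [::]
| preseq_rel u v : R (u, v) -> preseq u v.

Definition is_length (w : word) (n : nat) : Prop :=
  (exists w', preseq w w' /\ size w' = n) /\
  (forall w', preseq w w' -> n <= size w').

Definition in_GI (I : X -> Prop) (w : word) : Prop :=
  exists w', preseq w w' /\ (forall a, a \in w' -> I a.1).

Definition in_GupI (I : X -> Prop) (w : word) : Prop :=
  forall x, I x -> forall n m, is_length w n ->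
    is_length (w ++ [:: (x, false)]) m -> n < m.

End Presentation.

(** Induction on l(w). If w lies in G^I, take a = w and b = e. Otherwise
   l(wx) <= l(w) for some x in I. As every relation has even length, the
   parity of the length of a word is an invariant of G, so l(wx) = l(w) - 1.
   Factor wx = a b' by induction; then w = a (b' x) since x^2 = e, and
   l(w) <= l(a) + l(b' x) <= l(a) + l(b') + 1 = l(wx) + 1 = l(w). *)

From Stdlib Require Import Classical Wf_nat.
From mathcomp Require Import all_boot zify.
Set Implicit Arguments. Unset Strict Implicit. Unset Printing Implicit Defensive.

Lemma odd_size_freered (X : eqType) (w : word X) :
  odd (size (freered w)) = odd (size w).
Proof.
elim: w => [|a w IH] //=; rewrite -IH.
by case: (freered w) => [|b t] //=; case: ifP => _ //=; rewrite negbK.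
Qed.

Section Presentation.
Variables (X : eqType) (R : word X * word X -> Prop).

Lemma preseq_catr u v q : preseq R u v -> preseq R (u ++ q) (v ++ q).
Proof. exact: preseq_ctx [::] q u v. Qed.

Lemma preseq_catl u v p : preseq R u v -> preseq R (p ++ u) (p ++ v).
Proof. by move=> uv; have := preseq_ctx p [::] uv; rewrite !cats0. Qed.

Lemma preseq_cat u v u' v' :
  preseq R u u' -> preseq R v v' -> preseq R (u ++ v) (u' ++ v').
Proof.
by move=> uu' vv'; apply: preseq_trans (preseq_catr v uu') (preseq_catl u' vv').
Qed.

Lemma preseq_rcons_sq w x :
  preseq R ((w ++ [:: (x, false)]) ++ [:: (x, false)]) w.
Proof. by rewrite -catA; have := preseq_catl w (preseq_sq R x); rewrite cats0. Qed.

Lemma is_length_exists w : exists n, is_length R w n.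
Proof.
pose P n := exists w', preseq R w w' /\ size w' = n.
have [|n [[Pn minn] _]] := @dec_inh_nat_subset_has_unique_least_element P
  (fun n => classic (P n)).
  by exists (size w), w; split=> //; apply: preseq_refl.
by exists n; split=> // w' ww'; apply/leP/minn; exists w'.
Qed.

Lemma is_length_unique w n m : is_length R w n -> is_length R w m -> n = m.
Proof.
move=> [[w1 [ww1 <-]] min1] [[w2 [ww2 <-]] min2].
by apply/eqP; rewrite eqn_leq min1 // min2.
Qed.

Lemma is_length_nil : is_length R [::] 0.
Proof. by split=> //; exists [::]; split=> //; apply: preseq_refl. Qed.

Lemma is_length_cat_le w u v n p q :
  is_length R w n -> preseq R w (u ++ v) -> is_length R u p ->
  is_length R v q -> n <= p + q.
Proof.
move=> [_ minw] wuv [[u' [uu' <-]] _] [[v' [vv' <-]] _].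
by rewrite -size_cat minw //; apply: preseq_trans wuv (preseq_cat uu' vv').
Qed.

Lemma is_length_letter_le a q : is_length R [:: a] q -> q <= 1.
Proof. by move=> [_ min]; apply: min (preseq_refl R _). Qed.

Lemma in_GI_nil I : in_GI R I [::].
Proof. by exists [::]; split=> //; apply: preseq_refl. Qed.

Lemma in_GI_rcons I b x : in_GI R I b -> I x -> in_GI R I (b ++ [:: (x, false)]).
Proof.
move=> [b' [bb' Ib']] Ix; exists (b' ++ [:: (x, false)]).
split; first exact: preseq_catr.
by move=> a; rewrite mem_cat inE => /orP[/Ib'|/eqP ->].
Qed.

Lemma not_in_GupI I w n : is_length R w n -> ~ in_GupI R I w ->
  exists2 x, I x & exists2 m, is_length R (w ++ [:: (x, false)]) m & m <= n.
Proof.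
move=> wn notGw; apply: NNPP => noDescent; apply: notGw => x Ix n' m wn' wxm.
rewrite (is_length_unique wn' wn) ltnNge; apply/negP=> mn; apply: noDescent.
by exists x => //; exists m.
Qed.

Lemma factorisation_rcons I w x a b n na nb :
  is_length R w n.+1 -> I x ->
  preseq R (w ++ [:: (x, false)]) (a ++ b) -> in_GI R I b ->
  is_length R a na -> is_length R b nb -> n = na + nb ->
  exists nb', preseq R w (a ++ b ++ [:: (x, false)]) /\
    in_GI R I (b ++ [:: (x, false)]) /\
    is_length R (b ++ [:: (x, false)]) nb' /\ n.+1 = na + nb'.
Proof.
move=> wn Ix wx_ab Gb an bn n_eq.
have [nb' bxn] := is_length_exists (b ++ [:: (x, false)]).
have w_abx : preseq R w (a ++ b ++ [:: (x, false)]).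
  apply: preseq_trans (preseq_sym (preseq_rcons_sq w x)) _.
  by rewrite catA; apply: preseq_catr.
exists nb'; split=> //; split; first exact: in_GI_rcons.
split=> //.
have [q xq] := is_length_exists [:: (x, false)].
have := is_length_cat_le wn w_abx an bxn.
have := is_length_cat_le bxn (preseq_refl R _) bn xq.
have := is_length_letter_le xq; lia.
Qed.

Section EvenRelations.
Hypothesis Reven : forall r, R r -> ~~ odd (rel_length r).

Lemma preseq_odd_size u v : preseq R u v -> odd (size u) = odd (size v).
Proof.
elim=> // [? ? ? _ -> _ -> //|p q ? ? _ IH|u0 v0 Ru0v0].
  by rewrite !size_cat !oddD IH.
move: (Reven Ru0v0); rewrite /rel_length odd_size_freered size_cat oddD.
by rewrite /winv size_rev size_map; case: (odd (size u0)); case: (odd _).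
Qed.

Lemma odd_is_length w n : is_length R w n -> odd n = odd (size w).
Proof. by move=> [[w' [ww' <-]] _]; rewrite (preseq_odd_size ww'). Qed.

Lemma is_length_descent w x n m :
  is_length R w n -> is_length R (w ++ [:: (x, false)]) m -> m <= n ->
  n = m.+1.
Proof.
move=> wn wxm mn.
have [q xq] := is_length_exists [:: (x, false)].
have n_le := is_length_cat_le wn (preseq_sym (preseq_rcons_sq w x)) wxm xq.
have m_neq_n : m != n.
  apply/eqP=> mn_eq; move: (odd_is_length wxm) (odd_is_length wn).
  by rewrite mn_eq size_cat addn1 /= => ->; case: (odd _).
have := is_length_letter_le xq; lia.
Qed.

End EvenRelations.
End Presentation.

Theorem proposition2p2 (X : eqType) (R : word X * word X -> Prop)
  (Reven : forall r, R r -> ~~ odd (rel_length r))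
  (I : X -> Prop) (w : word X) :
  exists (a b : word X) (nw na nb : nat),
    preseq R w (a ++ b) /\ in_GupI R I a /\ in_GI R I b /\
    is_length R w nw /\ is_length R a na /\ is_length R b nb /\
    nw = na + nb.
Proof.
have [n wn] := is_length_exists R w.
elim/ltn_ind: n w wn => n IH w wn.
have [Gw|notGw] := classic (in_GupI R I w).
  exists w, [::], n, n, 0; rewrite cats0 addn0.
  split; first exact: preseq_refl.
  split=> //; split; first exact: in_GI_nil.
  by split=> //; split=> //; split=> //; exact: is_length_nil.
have [x Ix [m wxm mn]] := not_in_GupI wn notGw.
have n_eq := is_length_descent Reven wn wxm mn; subst n.
have [a [b [m' [na [nb [wx_ab [Ga [Gb [wxm' [an [bn m_eq]]]]]]]]]]] :=
  IH m (ltnSn m) _ wxm.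
rewrite -(is_length_unique wxm wxm') in m_eq.
have [nb' [w_abx [Gbx [bxn n_eq']]]] :=
  factorisation_rcons wn Ix wx_ab Gb an bn m_eq.
exists a, (b ++ [:: (x, false)]), m.+1, na, nb'.
by do 6!(split=> //).
Qed.
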